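(* Let $(X,\mathcal T)$ be a spectral space with specialization order $\leq$. Consider the conditions: (i) $X$ is locally with maximum; (ii) $\mathcal T$ equals the Scott topology of $(X,\geq)$, i.e. the topology whose open sets are the subsets $U\subseteq X$ that are down-sets for $\leq$ and such that whenever $D\subseteq X$ is down-directed for $\leq$ with $\inf(D)\in U$, then $D\cap U\neq\emptyset$; (iii) every open quasi-compact subset of $X$ has finitely many maximal elements; (iv) the inverse topology $\mathcal T^\mathrm{inv}$ equals the topology on $X$ having the sets $\{x\}^\downarrow=\{y\in X\mid y\leq x\}$, $x\in X$, as a subbasis of closed sets. Then (i) $\Rightarrow$ (ii) $\Rightarrow$ (iii) $\Rightarrow$ (iv). Moreover, if $(X,\leq)$ is a complete lattice, then (ii), (iii) and (iv) are equivalent.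
   Context: A spectral space is a topological space homeomorphic to the prime spectrum of a commutative ring with the Zariski topology; its specialization order is $x\leq y$ iff $y\in\mathrm{Cl}(\{x\})$. $X$ is locally with maximum if every point has a local basis of open sets each of which has a maximum with respect to $\leq$. The inverse topology of $\mathcal T$ is the topology whose closed sets are the intersections of open quasi-compact subsets of $(X,\mathcal T)$. *)

From HB Require Import structures.
From mathcomp Require Import all_boot all_algebra.
From mathcomp Require Import boolp classical_sets cardinality.
Set Implicit Arguments. Unset Strict Implicit. Unset Printing Implicit Defensive.
Import GRing.Theory.
Local Open Scope classical_set_scope.
Local Open Scope ring_scope.

Definition prime_ideal (R : comPzRingType) (P : set R) : Prop :=
  [/\ P 0, (forall x y, P x -> P y -> P (x + y)),
      (forall r x, P x -> P (r * x)), ~ P 1 &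
      (forall x y, P (x * y) -> P x \/ P y)].

Definition Spec (R : comPzRingType) := {P : set R | prime_ideal P}.

Definition zariski_open (R : comPzRingType) (U : set (Spec R)) : Prop :=
  exists S : set R, U = [set p : Spec R | ~ (S `<=` sval p)].

Definition spectral (X : Type) (O : set (set X)) : Prop :=
  exists (R : comPzRingType) (f : X -> Spec R),
    bijective f /\ forall U : set X, O U <-> zariski_open (f @` U).

Definition closed_in (X : Type) (O : set (set X)) (C : set X) := O (~` C).

Definition closure_in (X : Type) (O : set (set X)) (A : set X) : set X :=
  \bigcap_(C in [set C | closed_in O C /\ A `<=` C]) C.

Definition spec_le (X : Type) (O : set (set X)) (x y : X) : Prop :=
  closure_in O [set x] y.

Definition quasi_compact (X : Type) (O : set (set X)) (A : set X) : Prop :=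
  forall F : set (set X), F `<=` O -> A `<=` \bigcup_(U in F) U ->
    exists G : set (set X), [/\ G `<=` F, finite_set G & A `<=` \bigcup_(U in G) U].

Definition is_maximum (X : Type) (le : X -> X -> Prop) (V : set X) (m : X) :=
  V m /\ forall y, V y -> le y m.

Definition locally_with_maximum (X : Type) (O : set (set X)) : Prop :=
  forall x (U : set X), O U -> U x ->
    exists V : set X, [/\ O V, V x, V `<=` U & exists m, is_maximum (spec_le O) V m].

Definition down_set (X : Type) (le : X -> X -> Prop) (U : set X) :=
  forall x y, U x -> le y x -> U y.

Definition down_directed (X : Type) (le : X -> X -> Prop) (D : set X) :=
  (exists d, D d) /\ forall a b, D a -> D b -> exists c, [/\ D c, le c a & le c b].

Definition is_inf (X : Type) (le : X -> X -> Prop) (D : set X) (i : X) :=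
  (forall d, D d -> le i d) /\ forall l, (forall d, D d -> le l d) -> le l i.

Definition is_sup (X : Type) (le : X -> X -> Prop) (D : set X) (s : X) :=
  (forall d, D d -> le d s) /\ forall u, (forall d, D d -> le d u) -> le s u.

Definition scott_open_dual (X : Type) (le : X -> X -> Prop) (U : set X) : Prop :=
  down_set le U /\
  forall (D : set X) (i : X), down_directed le D -> is_inf le D i -> U i ->
    exists y, D y /\ U y.

Definition maximal_elements (X : Type) (le : X -> X -> Prop) (U : set X) : set X :=
  [set m | U m /\ forall y, U y -> le m y -> y = m].

Definition inverse_closed (X : Type) (O : set (set X)) (C : set X) : Prop :=
  exists G : set (set X), (forall V, G V -> O V /\ quasi_compact O V) /\
    C = \bigcap_(V in G) V.

Definition down_closure (X : Type) (le : X -> X -> Prop) (x : X) : set X :=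
  [set y | le y x].

(* closed sets of the topology with closed subbasis {down x | x in X}:
   arbitrary intersections of finite unions of subbasic closed sets *)
Definition down_subbasis_closed (X : Type) (le : X -> X -> Prop) (C : set X) : Prop :=
  exists G : set (set X),
    (forall K, G K -> exists F : set X, finite_set F /\
                        K = \bigcup_(x in F) down_closure le x) /\
    C = \bigcap_(K in G) K.

Definition complete_lattice (X : Type) (le : X -> X -> Prop) : Prop :=
  forall A : set X, (exists s, is_sup le A s) /\ (exists i, is_inf le A i).

From mathcomp Require Import all_boot all_algebra.
From mathcomp Require Import boolp classical_sets cardinality.
From mathcomp Require Import ring.
Set Implicit Arguments. Unset Strict Implicit. Unset Printing Implicit Defensive.
Import GRing.Theory.
Local Open Scope classical_set_scope.
Local Open Scope ring_scope.

(* View X as Spec R, so that x <= y iff P x is contained in P y and the opens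
   are the D(S).  Opens are Scott open since a down-directed intersection of
   primes is prime; with local maxima, x is the infimum of the maxima of its
   neighbourhoods, which gives the converse.  Removing from an open quasi-compact
   U all its maximal elements but one leaves a Scott open set, so for (ii) these
   sets cover U and a finite subcover bounds the number of maximal elements.  By
   Zorn (a union of a chain of primes is prime, and quasi-compactness keeps it in
   U) every point of such a U lies below a maximal one, so under (iii) U is a
   finite union of principal down-sets, giving (iv).  Conversely, in a complete
   lattice a Scott-closed set is compact for the topology with the down-sets
   {x}^down as closed subbasis; under (iv) every basic open D(r) is an
   intersection of finite unions of such sets, so if a Scott open U were not a
   neighbourhood of y, its complement would contain a point below y, hence y. *)

(** * Finite sets, chains and Zorn *)

Lemma finite_set_ind (T : Type) (Q : set T -> Prop) :
  Q set0 -> (forall A x, finite_set A -> Q A -> Q (x |` A)) ->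
  forall A, finite_set A -> Q A.
Proof.
move=> Q0 QU A /(@finite_seqP {classic T} A)[s ->]; elim: s => [|x s IH] /=.
  by have -> : [set` [::] ] = (set0 : set {classic T}) by apply/seteqP; split.
have -> : [set` x :: s] = x |` [set` s].
  apply/seteqP; split => y /=; rewrite inE; first by move=> /orP[/eqP->|]; [left|right].
  by move=> [->|->]; rewrite ?eqxx ?orbT.
by apply: QU => //; exact: (@finite_seq {classic T}).
Qed.

Lemma finite_bigcup_closed (T I : Type) (Q : set (set T)) (F : set I) (f : I -> set T) :
  Q set0 -> (forall A B, Q A -> Q B -> Q (A `|` B)) ->
  finite_set F -> (forall i, F i -> Q (f i)) -> Q (\bigcup_(i in F) f i).
Proof.
move=> Q0 QU; move: F; apply: finite_set_ind => [|F i _ IH] Qf.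
  by rewrite bigcup_set0.
by rewrite bigcup_setU1; apply: QU; [apply: Qf; left|apply: IH => j Fj; apply: Qf; right].
Qed.

Lemma finite_bigcap_closed (T I : Type) (Q : set (set T)) (K : set T) (F : set I)
    (f : I -> set T) :
  (forall A B, Q A -> Q B -> Q (A `&` B)) -> Q K ->
  finite_set F -> (forall i, F i -> Q (f i)) -> Q (K `&` \bigcap_(i in F) f i).
Proof.
move=> QI QK; move: F; apply: finite_set_ind => [|F i _ IH] Qf.
  by rewrite bigcap_set0 setIT.
rewrite bigcap_setU1 setICA; apply: QI; first by apply: Qf; left.
by apply: IH => j Fj; apply: Qf; right.
Qed.

Section Chains.
Variables (T : Type) (R : T -> T -> Prop).
Hypothesis R_trans : forall r s t, R r s -> R s t -> R r t.

Lemma total_on_finite_ub (C G : set T) : total_on C R -> C !=set0 ->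
  finite_set G -> G `<=` C -> exists2 u, C u & forall g, G g -> R g u.
Proof.
move=> Ctot [c0 Cc0]; move: G; apply: finite_set_ind => [_|G x _ IH GC].
  by exists c0.
have [u Cu Gu] := IH (fun g Gg => GC g (or_intror Gg)).
have Cx : C x by apply: GC; left.
have [xu|ux] := Ctot x u Cx Cu.
  by exists u => // g [->|/Gu].
exists x => // g [->|/Gu gu]; last exact: R_trans gu ux.
by have [] := Ctot x x Cx Cx.
Qed.

Lemma total_on_finite_pigeonhole (I : Type) (C : set T) (F : set I)
    (Phi : T -> I -> Prop) :
  total_on C R -> C !=set0 -> finite_set F ->
  (forall c c' i, R c c' -> Phi c' i -> Phi c i) ->
  (forall c, C c -> exists2 i, F i & Phi c i) ->
  exists2 i, F i & forall c, C c -> Phi c i.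
Proof.
move=> Ctot [c0 Cc0] finF Phi_mono CF; apply: contrapT => noi.
have /choice[bad badP] : forall i, exists c, F i -> C c /\ ~ Phi c i.
  move=> i; have [Fi|nFi] := pselect (F i); last by exists c0.
  apply: contrapT => nbad; apply: noi; exists i => //.
  by move=> c Cc; apply: contrapT => nPhi; apply: nbad; exists c.
have badC : bad @` F `<=` C by move=> _ [i Fi <-]; exact: (badP i Fi).1.
have [u Cu ub] := total_on_finite_ub Ctot (ex_intro _ c0 Cc0) (finite_image bad finF) badC.
have [i Fi Phi_ui] := CF u Cu.
by apply: (badP i Fi).2; apply: Phi_mono Phi_ui; apply: ub; exists i.
Qed.

End Chains.

Lemma Zorn_above (T : Type) (R : T -> T -> Prop) (S : set T) (t0 : T) :
  (forall t, R t t) -> (forall r s t, R r s -> R s t -> R r t) ->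
  (forall s t, R s t -> R t s -> s = t) ->
  (forall C, C `<=` S -> C !=set0 -> total_on C R ->
     exists2 u, S u & forall c, C c -> R c u) ->
  S t0 -> exists m, [/\ S m, R t0 m & forall s, S s -> R m s -> s = m].
Proof.
move=> Rrefl Rtrans Ranti chainS St0.
pose S0 := {t | S t /\ R t0 t}.
have [] := @Zorn S0 (fun a b => `[< R (sval a) (sval b) >]).
- by move=> a; apply/asboolP.
- by move=> a b c /asboolP ab /asboolP bc; apply/asboolP; exact: Rtrans ab bc.
- by move=> [a ?] [b ?] /asboolP ab /asboolP ba; apply: eq_exist; exact: Ranti.
- move=> A Atot; have [[a0 Aa0]|A0] := pselect (A !=set0); last first.
    by exists (exist _ t0 (conj St0 (Rrefl t0))) => a Aa; exfalso; apply: A0; exists a.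
  have Ctot : total_on (sval @` A) R.
    by move=> _ _ [a Aa <-] [b Ab <-]; have [/asboolP|/asboolP] := Atot a b Aa Ab; tauto.
  have [||u Su ub] := chainS (sval @` A) _ _ Ctot.
  + by move=> _ [a _ <-]; exact: (svalP a).1.
  + by exists (sval a0), a0.
  have t0u : R t0 u by apply: Rtrans (svalP a0).2 (ub _ _); exists a0.
  by exists (exist _ u (conj Su t0u)) => a Aa; apply/asboolP; apply: ub; exists a.
move=> [m [Sm t0m]] mmax; exists m; split => // s Ss ms.
have t0s : R t0 s := Rtrans _ _ _ t0m ms.
by have [] := mmax (exist _ s (conj Ss t0s)) (asboolT ms).
Qed.

(** * Prime ideals *)

Section PrimeIdeals.
Variable R : comPzRingType.
Implicit Types (I J Q T : set R) (r : R).

Definition ideal J :=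
  [/\ J 0, (forall x y, J x -> J y -> J (x + y)) & (forall a x, J x -> J (a * x))].

Lemma prime_ideal_ideal Q : prime_ideal Q -> ideal Q.
Proof. by case. Qed.

Lemma prime_idealX Q r n : prime_ideal Q -> Q (r ^+ n) -> Q r.
Proof.
case=> _ _ _ Q1 Qprime; elim: n => [|n IH]; first by rewrite expr0.
by rewrite exprS => /Qprime[|/IH].
Qed.

Lemma ideal_sum J (l : seq (R * R)) : ideal J -> (forall p, p \in l -> J p.2) ->
  J (\sum_(p <- l) p.1 * p.2).
Proof.
case=> J0 JD JM; elim: l => [|p l IH] Jl; first by rewrite big_nil.
rewrite big_cons; apply: JD; first by apply: JM; apply: Jl; rewrite inE eqxx.
by apply: IH => q ql; apply: Jl; rewrite inE ql orbT.
Qed.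

Definition ideal_span T : set R := [set x | exists l : seq (R * R),
  (forall p, p \in l -> T p.2) /\ x = \sum_(p <- l) p.1 * p.2].

Lemma ideal_span_ideal T : ideal (ideal_span T).
Proof.
split.
- by exists [::]; rewrite big_nil.
- move=> _ _ [l1 [T1 ->]] [l2 [T2 ->]]; exists (l1 ++ l2); rewrite big_cat.
  by split=> // p; rewrite mem_cat => /orP[/T1|/T2].
- move=> a _ [l [Tl ->]]; exists [seq (a * p.1, p.2) | p <- l]; split.
    by move=> _ /mapP[p pl ->]; exact: (Tl p pl).
  by rewrite mulr_sumr big_map; apply: eq_bigr => p _; rewrite mulrA.
Qed.

Lemma sub_ideal_span T : T `<=` ideal_span T.
Proof.
move=> t Tt; exists [:: (1, t)]; rewrite big_seq1 mul1r; split=> // p.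
by rewrite inE => /eqP->.
Qed.

Lemma ideal_bigcup_chain (F : set (set R)) : F !=set0 -> total_on F subset ->
  (forall J, F J -> ideal J) -> ideal (\bigcup_(J in F) J).
Proof.
move=> [J0 FJ0] Ftot Fideal; split.
- by exists J0 => //; have [] := Fideal J0 FJ0.
- move=> x y [J FJ Jx] [K FK Ky].
  have [JK|KJ] := Ftot J K FJ FK.
    by exists K => //; have [_ KD _] := Fideal K FK; apply: KD => //; exact: JK.
  by exists J => //; have [_ JD _] := Fideal J FJ; apply: JD => //; exact: KJ.
- by move=> a x [J FJ Jx]; exists J => //; have [_ _ JM] := Fideal J FJ; exact: JM.
Qed.

Definition ideal_addr J r : set R := [set z | exists x j, J j /\ z = j + x * r].

Lemma ideal_addr_ideal J r : ideal J -> ideal (ideal_addr J r).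
Proof.
case=> J0 JD JM; split.
- by exists 0, 0; rewrite mul0r addr0.
- move=> _ _ [x [j [Jj ->]]] [y [k [Jk ->]]]; exists (x + y), (j + k).
  by split; [exact: JD|ring].
- move=> a _ [x [j [Jj ->]]]; exists (a * x), (a * j).
  by split; [exact: JM|ring].
Qed.

Lemma sub_ideal_addr J r : ideal J -> J `<=` ideal_addr J r.
Proof. by move=> _ j Jj; exists 0, j; rewrite mul0r addr0. Qed.

Lemma ideal_addr_r J r : ideal J -> ideal_addr J r r.
Proof. by case=> J0 _ _; exists 1, 0; rewrite add0r mul1r. Qed.

Lemma prime_ideal_avoiding I r : ideal I -> (forall n, ~ I (r ^+ n)) ->
  exists Q, [/\ prime_ideal Q, I `<=` Q & ~ Q r].
Proof.
move=> idI Ir.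
pose S := [set J | ideal J /\ forall n, ~ J (r ^+ n)].
have [|||||J [[[J0 JD JM] Jr] IJ Jmax]] := @Zorn_above _ subset S I.
- exact: subset_refl.
- by move=> A B C; apply: subset_trans.
- by move=> A B AB BA; rewrite eqEsubset.
- move=> F FS F0 Ftot; exists (\bigcup_(J in F) J); last by move=> J FJ; exact: bigcup_sup.
  split; first by apply: ideal_bigcup_chain => // J /FS[].
  by move=> n [J /FS[_ Jr]]; apply: Jr.
- by split.
have Jpow c : ~ J c -> exists n, ideal_addr J c (r ^+ n).
  move=> Jc; apply: contrapT => Jcr; apply: Jc.
  have idJc := ideal_addr_ideal c (And3 J0 JD JM).
  rewrite -(Jmax (ideal_addr J c)); last exact: sub_ideal_addr.
    exact: ideal_addr_r.
  by split=> // n Jcn; apply: Jcr; exists n.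
exists J; split=> //; last by move=> Jr1; apply: (Jr 1%N); rewrite expr1.
split=> //; first by move=> J1; apply: (Jr 0%N); rewrite expr0.
move=> a b Jab; apply: contrapT => /not_orP[Ja Jb].
have [n [x [j [Jj rn]]]] := Jpow a Ja; have [m [y [k [Jk rm]]]] := Jpow b Jb.
apply: (Jr (n + m)%N); rewrite exprD rn rm.
have -> : (j + x * a) * (k + y * b) = (j + x * a) * k + ((y * b) * j + (x * y) * (a * b)).
  by ring.
by apply: (JD); [exact: JM | apply: JD; exact: JM].
Qed.

Lemma prime_ideal_bigcup_chain (F : set (set R)) : F !=set0 -> total_on F subset ->
  (forall Q, F Q -> prime_ideal Q) -> prime_ideal (\bigcup_(Q in F) Q).
Proof.
move=> F0 Ftot Fprime.
have [J0 JD JM] := ideal_bigcup_chain F0 Ftot (fun Q FQ => prime_ideal_ideal (Fprime Q FQ)).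
split=> //; first by move=> [Q /Fprime[]].
move=> x y [Q FQ Qxy].
by have [_ _ _ _ /(_ x y Qxy)[]] := Fprime Q FQ; [left|right]; exists Q.
Qed.

Lemma prime_ideal_bigcap_directed (F : set (set R)) : F !=set0 ->
  (forall Q1 Q2, F Q1 -> F Q2 -> exists Q, [/\ F Q, Q `<=` Q1 & Q `<=` Q2]) ->
  (forall Q, F Q -> prime_ideal Q) -> prime_ideal (\bigcap_(Q in F) Q).
Proof.
move=> [Q0 FQ0] Fdir Fprime; split.
- by move=> Q /Fprime[].
- by move=> x y Fx Fy Q FQ; have [_ QD _ _ _] := Fprime Q FQ; apply: QD; [exact: Fx|exact: Fy].
- by move=> a x Fx Q FQ; have [_ _ QM _ _] := Fprime Q FQ; apply: QM; exact: Fx.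
- by move=> F1; have [_ _ _ + _] := Fprime Q0 FQ0; apply; exact: F1.
move=> x y Fxy; apply: contrapT => /not_orP[].
move=> /existsNP[Q1 /not_implyP[FQ1 Q1x]] /existsNP[Q2 /not_implyP[FQ2 Q2y]].
have [Q [FQ QQ1 QQ2]] := Fdir Q1 Q2 FQ1 FQ2.
by have [_ _ _ _ /(_ x y (Fxy Q FQ))[/QQ1|/QQ2]] := Fprime Q FQ.
Qed.

End PrimeIdeals.

(** * Quasi-compactness, inverse and Scott topologies *)

Lemma quasi_compact_setU (X : Type) (O : set (set X)) (A B : set X) :
  quasi_compact O A -> quasi_compact O B -> quasi_compact O (A `|` B).
Proof.
move=> qA qB F FO AB.
have [G1 [G1F fG1 AG1]] := qA F FO (fun z Az => AB z (or_introl Az)).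
have [G2 [G2F fG2 BG2]] := qB F FO (fun z Bz => AB z (or_intror Bz)).
exists (G1 `|` G2); split; first by move=> V [/G1F|/G2F].
  by rewrite finite_setU.
by move=> z [/AG1|/BG2] [V GV Vz]; exists V => //; [left|right].
Qed.

Lemma inverse_closedP (X : Type) (O : set (set X)) (C : set X) :
  inverse_closed O C <->
  (forall y, (forall V, O V -> quasi_compact O V -> C `<=` V -> V y) -> C y).
Proof.
split.
- move=> [G [GV ->]] y yV V GVV; have [oV qV] := GV V GVV.
  by apply: yV => // z; apply.
- move=> Cy; exists [set V | [/\ O V, quasi_compact O V & C `<=` V]]; split.
    by move=> V [].
  apply/seteqP; split=> [z Cz V [_ _]|z zV]; first exact.
  by apply: Cy => V oV qV CV; apply: zV.
Qed.

Lemma inverse_closed_open (X : Type) (O : set (set X)) (V : set X) :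
  O V -> quasi_compact O V -> inverse_closed O V.
Proof. by move=> oV qV; apply/inverse_closedP => y; apply. Qed.

Lemma inverse_closed_bigcap (X : Type) (O : set (set X)) (G : set (set X)) :
  (forall K, G K -> inverse_closed O K) -> inverse_closed O (\bigcap_(K in G) K).
Proof.
move=> Gic; apply/inverse_closedP => y yV K GK; apply/(inverse_closedP _ _).1 => [|V oV qV KV].
  exact: Gic.
by apply: yV => // z zG; apply: KV; exact: zG.
Qed.

Lemma scott_open_setD_maximal (T : Type) (le : T -> T -> Prop) (U : set T) (m : T) :
  scott_open_dual le U -> scott_open_dual le (U `\` (maximal_elements le U `\ m)).
Proof.
move=> [Udown Uscott]; split.
  move=> z w [Uz zM] wz; split; first exact: Udown wz.
  by move=> [[Uw wmax] wm]; apply: zM; rewrite (wmax z Uz wz).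
move=> D i Ddir iinf [Ui iM]; have [d [Dd Ud]] := Uscott D i Ddir iinf Ui.
apply: contrapT => noD.
have DUM c : D c -> U c -> (maximal_elements le U `\ m) c.
  by move=> Dc Uc; apply: contrapT => cM; apply: noD; exists c.
have [[_ dmax] _] := DUM d Dd Ud.
have d_lb e : D e -> le d e.
  move=> De; have [c [Dc ce cd]] := Ddir.2 e d De Dd.
  have [[_ cmax] _] := DUM c Dc (Udown _ _ Ud cd).
  by rewrite (cmax d Ud cd).
by apply: iM; rewrite (dmax i Ui (iinf.2 d d_lb)); exact: DUM.
Qed.

Lemma finite_maximal_of_scott (T : Type) (O : set (set T)) (le : T -> T -> Prop) (U : set T) :
  (forall V, O V <-> scott_open_dual le V) ->
  O U -> quasi_compact O U -> finite_set (maximal_elements le U).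
Proof.
move=> scottE oU qU; set M := maximal_elements le U.
have [[m0 Mm0]|M0] := pselect (M !=set0); last first.
  suff -> : M = set0 by exact: finite_set0.
  by apply/seteqP; split=> // m Mm; apply: M0; exists m.
pose Sm m := U `\` (M `\ m).
have Sm_open : Sm @` M `<=` O.
  by move=> _ [m _ <-]; apply/scottE/scott_open_setD_maximal/scottE.
have Sm_cover : U `<=` \bigcup_(V in Sm @` M) V.
  move=> z Uz; have [Mz|Mz] := pselect (M z).
    by exists (Sm z); [exists z|split=> // -[_]; apply].
  by exists (Sm m0); [exists m0|split=> // -[]].
have [G [GSm finG UG]] := qU _ Sm_open Sm_cover.
apply: (@sub_finite_set _ _ (\bigcup_(V in G) (V `&` M))).
  by move=> z Mz; have [V GV Vz] := UG z Mz.1; exists V.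
apply: bigcup_finite => // _ /GSm[m Mm <-].
apply: (@sub_finite_set _ _ [set m]); last exact: finite_set1.
by move=> z [[_ zM] Mz]; apply: contrapT => zm; exact: zM.
Qed.

Section CompleteLatticeMeet.
Variables (T : Type) (le : T -> T -> Prop) (lattice : complete_lattice le).

Definition meet a b : T := projT1 (cid ((lattice [set a; b]).2)).

Let meetP a b : is_inf le [set a; b] (meet a b).
Proof. exact: projT2 (cid _). Qed.

Lemma meet_lel a b : le (meet a b) a. Proof. by apply: (meetP a b).1; left. Qed.
Lemma meet_ler a b : le (meet a b) b. Proof. by apply: (meetP a b).1; right. Qed.
Lemma meet_glb a b c : le c a -> le c b -> le c (meet a b).
Proof. by move=> ca cb; apply: (meetP a b).2 => d [->|->]. Qed.

End CompleteLatticeMeet.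

Definition finite_down_union (T : Type) (le : T -> T -> Prop) (K : set T) :=
  exists F, finite_set F /\ K = \bigcup_(x in F) down_closure le x.

Lemma finite_down_unionI (T : Type) (le : T -> T -> Prop) (K1 K2 : set T) :
  (forall x y z, le x y -> le y z -> le x z) -> complete_lattice le ->
  finite_down_union le K1 -> finite_down_union le K2 -> finite_down_union le (K1 `&` K2).
Proof.
move=> le_trans lattice [F1 [finF1 ->]] [F2 [finF2 ->]].
exists [set meet lattice x1 x2 | x1 in F1 & x2 in F2]; split; first exact: finite_image2.
apply/seteqP; split=> [z [[x1 F1x1 zx1] [x2 F2x2 zx2]]|z [_ [x1 F1x1 [x2 F2x2 <-]] zm]].
  by exists (meet lattice x1 x2); [exists x1 => //; exists x2|exact: meet_glb].
split; first by exists x1 => //; exact: le_trans zm (meet_lel _ _ _).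
by exists x2 => //; exact: le_trans zm (meet_ler _ _ _).
Qed.

Section CompleteLatticeCompactness.
Variables (T : Type) (le : T -> T -> Prop).
Hypotheses (le_refl : forall x, le x x)
  (le_trans : forall x y z, le x y -> le y z -> le x z)
  (le_anti : forall x y, le x y -> le y x -> x = y)
  (lattice : complete_lattice le).
Variables (A : set T) (KK : set (set T)).
Hypotheses (A_closed : scott_open_dual le (~` A))
  (KK_down : KK `<=` finite_down_union le)
  (KK_setI : forall K1 K2, KK K1 -> KK K2 -> KK (K1 `&` K2))
  (KK_meets : forall K, KK K -> K `&` A !=set0)
  (KK_neq0 : KK !=set0).

Let A_up a b : A a -> le a b -> A b.
Proof. by move=> Aa ab; apply: contrapT => Ab; exact: (A_closed.1 b a Ab ab Aa). Qed.

Let A_inf D i : down_directed le D -> D `<=` A -> is_inf le D i -> A i.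
Proof.
move=> Ddir DA iinf; apply: contrapT => Ai.
by have [d [Dd]] := A_closed.2 D i Ddir iinf Ai; apply; exact: DA.
Qed.

Local Notation meet := (meet lattice).
Local Notation meet_lel := (meet_lel lattice).
Local Notation meet_ler := (meet_ler lattice).
Local Notation meet_glb := (meet_glb lattice).

Let dominates a := forall K, KK K -> exists w, [/\ K w, A w & le w a].

Let dominates_inf_chain C i : C `<=` dominates -> C !=set0 ->
  total_on C (fun a b => le b a) -> is_inf le C i -> dominates i.
Proof.
move=> Cdom [c0 Cc0] Ctot iinf K KK_K; have [F [finF eK]] := KK_down KK_K.
have [x Fx xC] : exists2 x, F x & forall c, C c -> exists w, [/\ A w, le w c & le w x].
  apply: (@total_on_finite_pigeonhole _ (fun a b => le b a)) => //.
  - by move=> r s t rs st; exact: le_trans st rs.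
  - by exists c0.
  - by move=> c c' y c'c [w [Aw wc' wy]]; exists w; split=> //; exact: le_trans wc' c'c.
  move=> c Cc; have [w [Kw Aw wc]] := Cdom c Cc K KK_K.
  by move: Kw; rewrite eK => -[y Fy wy]; exists y => //; exists w.
pose Dm := [set meet c x | c in C].
have Dm_dir : down_directed le Dm.
  split; first by exists (meet c0 x), c0.
  have meet_mono a b : le a b -> le (meet a x) (meet b x).
    by move=> ab; apply: meet_glb (meet_ler a x); exact: le_trans (meet_lel a x) ab.
  move=> _ _ [c1 C1 <-] [c2 C2 <-]; have [c21|c12] := Ctot c1 c2 C1 C2.
    by exists (meet c2 x); split; [exists c2|exact: meet_mono|exact: le_refl].
  by exists (meet c1 x); split; [exists c1|exact: le_refl|exact: meet_mono].
have DmA : Dm `<=` A.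
  move=> _ [c Cc <-]; have [w [Aw wc wx]] := xC c Cc.
  by apply: A_up Aw _; exact: meet_glb.
have [j jinf] := (lattice Dm).2.
exists j; split; last 1 first.
- by apply: iinf.2 => c Cc; apply: le_trans (meet_lel c x); apply: jinf.1; exists c.
- by rewrite eK; exists x => //; apply: le_trans (meet_ler c0 x); apply: jinf.1; exists c0.
- exact: A_inf Dm_dir DmA jinf.
Qed.

Let in_KK_of_minimal a : dominates a -> (forall b, dominates b -> le b a -> b = a) ->
  forall K, KK K -> K a.
Proof.
move=> adom amin K0 KK0; apply: contrapT => K0a; have [F0 [finF0 eK0]] := KK_down KK0.
have /choice[Kx Kx_sep] : forall x, exists K,
    F0 x -> KK K /\ forall w, K w -> A w -> ~ le w (meet a x).
  move=> x; have [Fx|nFx] := pselect (F0 x); last by exists K0.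
  apply: contrapT => nK.
  have mdom : dominates (meet a x).
    move=> K KK_K; apply: contrapT => nw; apply: nK; exists K => _; split=> // w Kw Aw wm.
    by apply: nw; exists w.
  apply: K0a; rewrite eK0; exists x => //.
  by rewrite /down_closure /= -(amin _ mdom (meet_lel a x)); exact: meet_ler.
have KK_K : KK (K0 `&` \bigcap_(x in F0) Kx x).
  by apply: finite_bigcap_closed => // x Fx; exact: (Kx_sep x Fx).1.
have [w [[K0w Kxw] Aw wa]] := adom _ KK_K.
move: (K0w); rewrite eK0 => -[x Fx wx].
by apply: ((Kx_sep x Fx).2 w (Kxw x Fx) Aw); exact: meet_glb.
Qed.

(* Compactness of [A] for the topology having the [down_closure]s as closed
   subbasis, in finite intersection form: Zorn gives a minimal [a] such that
   every member of [KK] meets [A] below [a], and minimality puts [a] in every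
   member of [KK]. *)
Lemma scott_closed_meets_bigcap : exists2 a, A a & forall K, KK K -> K a.
Proof.
have [[t tsup] _] := lattice setT.
have tdom : dominates t.
  move=> K /KK_meets[w [Kw Aw]]; exists w; split=> //; exact: tsup.1.
have [||||a [adom _ amin]] := @Zorn_above T (fun a b => le b a) dominates t _ _ _ _ tdom.
- exact: le_refl.
- by move=> r s u rs su; exact: le_trans su rs.
- by move=> r s rs sr; exact: le_anti.
- move=> C Cdom C0 Ctot; have [i iinf] := (lattice C).2.
  by exists i; [exact: (dominates_inf_chain Cdom C0 Ctot iinf)|exact: iinf.1].
have [K KK_K] := KK_neq0; have [w [_ Aw wa]] := adom K KK_K.
by exists a; [exact: A_up Aw wa|exact: in_KK_of_minimal].
Qed.

End CompleteLatticeCompactness.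

(** * Prime spectra *)

Definition spec_homeo (R : comPzRingType) (X : Type) (O : set (set X)) (P : X -> set R) :=
  [/\ forall x, prime_ideal (P x), injective P,
      forall Q, prime_ideal Q -> exists x, P x = Q &
      forall U, O U <-> exists S : set R, U = [set x | ~ S `<=` P x]].

Lemma spectral_spec_homeo (X : Type) (O : set (set X)) :
  spectral O -> exists (R : comPzRingType) (P : X -> set R), spec_homeo O P.
Proof.
move=> [R [f [[g fK gK] fO]]]; exists R, (fun x => sval (f x)); split.
- by move=> x; exact: svalP.
- move=> x y Pxy; rewrite -(fK x) -(fK y); congr g.
  by move: Pxy; case: (f x) => Q ? /=; case: (f y) => Q' ? /= QQ'; exact: eq_exist.
- by move=> Q Qprime; exists (g (exist _ Q Qprime)); rewrite gK.
move=> U; rewrite fO; split=> -[S eS]; exists S; apply/seteqP; split=> x.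
- move=> Ux; have : (f @` U) (f x) by exists x.
  by rewrite eS.
- move=> /= SP; have : [set p : Spec R | ~ S `<=` sval p] (f x) by [].
  by rewrite -eS => -[y Uy /(can_inj fK) <-].
- by move=> [y Uy <-]; move: Uy; rewrite eS.
- by move=> /= SP; exists (g x); rewrite ?gK // eS /= gK.
Qed.

Section SpecHomeo.
Variables (R : comPzRingType) (X : Type) (O : set (set X)) (P : X -> set R).
Hypothesis homeo : spec_homeo O P.

Let P_prime x : prime_ideal (P x). Proof. by case: homeo. Qed.
Let P_inj : injective P. Proof. by case: homeo. Qed.
Let P_surj Q : prime_ideal Q -> exists x, P x = Q.
Proof. by case: homeo => _ _ + _; apply. Qed.
Let openE U : O U <-> exists S : set R, U = [set x | ~ S `<=` P x].
Proof. by case: homeo. Qed.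

Local Notation le := (spec_le O).

Definition basic_open r : set X := [set x | ~ P x r].

Lemma open_basic r : O (basic_open r).
Proof.
apply/openE; exists [set r]; apply/seteqP; split=> x /= Pxr.
  by move=> SP; apply: Pxr; exact: SP.
by move=> Pr; apply: Pxr => _ ->.
Qed.

Lemma openP U : O U <-> forall x, U x -> exists2 r, basic_open r x & basic_open r `<=` U.
Proof.
split=> [/openE[S ->] x /= SPx|Ubasic].
  have [r Sr Pxr] : exists2 r, S r & ~ P x r.
    apply: contrapT => noS; apply: SPx => r Sr; apply: contrapT => Pxr.
    by apply: noS; exists r.
  by exists r => // z /= Pzr SPz; apply: Pzr; exact: SPz.
apply/openE; exists [set r | basic_open r `<=` U]; apply/seteqP; split=> x.
  by move=> /Ubasic[r rx rU] /= SPx; exact: rx (SPx r rU).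
move=> /= SPx; apply: contrapT => Ux; apply: SPx => r rU; apply: contrapT => Pxr.
by apply: Ux; exact: rU.
Qed.

Lemma spec_leP x y : le x y <-> P x `<=` P y.
Proof.
split=> [xy r Pxr|PxPy C [Cclosed Cx]].
  by apply: (xy [set z | P z r]); split; [exact: (open_basic r)|move=> _ ->].
apply: contrapT => Cy; have [r ry rC] := (openP _).1 Cclosed y Cy.
by apply: (rC x) (Cx x erefl) => Pxr; exact: ry (PxPy r Pxr).
Qed.

Lemma spec_le_refl x : le x x. Proof. exact/spec_leP. Qed.

Lemma spec_le_trans x y z : le x y -> le y z -> le x z.
Proof. by move=> /spec_leP xy /spec_leP yz; apply/spec_leP => r /xy /yz. Qed.

Lemma spec_le_anti x y : le x y -> le y x -> x = y.
Proof. by move=> /spec_leP xy /spec_leP yx; apply: P_inj; rewrite eqEsubset. Qed.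

Lemma open_down U x y : O U -> U y -> le x y -> U x.
Proof. by move=> /openE[S ->] /= SPy /spec_leP xy SPx; apply: SPy => r /SPx /xy. Qed.

Lemma basic_open0 : basic_open 0 = set0.
Proof. by apply/seteqP; split=> x //=; apply; have [] := P_prime x. Qed.

Lemma basic_open1 : basic_open 1 = setT.
Proof. by apply/seteqP; split=> x //= _; have [] := P_prime x. Qed.

Lemma basic_openM r s : basic_open (r * s) = basic_open r `&` basic_open s.
Proof.
apply/seteqP; split=> x /=; last first.
  by move=> [Pr Ps] Prs; have [_ _ _ _ /(_ r s Prs)[]] := P_prime x.
have [_ _ PM _ _] := P_prime x.
by move=> Prs; split=> Px; apply: Prs; [rewrite mulrC|]; exact: PM.
Qed.

Lemma open_setT : O setT. Proof. by rewrite -basic_open1; exact: open_basic. Qed.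

Lemma open_setI U V : O U -> O V -> O (U `&` V).
Proof.
move=> /openP oU /openP oV; apply/openP => x [/oU[r rx rU] /oV[s sx sV]].
by exists (r * s); rewrite basic_openM; [split|exact: setISS].
Qed.

Lemma open_setU U V : O U -> O V -> O (U `|` V).
Proof.
move=> /openP oU /openP oV; apply/openP => x [/oU[r rx rU]|/oV[r rx rV]].
  by exists r => // z /rU; left.
by exists r => // z /rV; right.
Qed.

Lemma basic_open_cover_span (T : set R) r :
  basic_open r `<=` \bigcup_(t in T) basic_open t -> exists n, ideal_span T (r ^+ n).
Proof.
move=> rT; apply: contrapT => /forallNP noPow.
have [Q [Qprime TQ Qr]] := prime_ideal_avoiding (ideal_span_ideal T) noPow.
have [x PxQ] := P_surj Qprime.
have rx : basic_open r x by rewrite /basic_open /= PxQ.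
have [t Tt] := rT x rx.
by apply; rewrite PxQ; apply: TQ; exact: sub_ideal_span.
Qed.

Lemma basic_open_finite_subcover (T : set R) r :
  basic_open r `<=` \bigcup_(t in T) basic_open t ->
  exists G, [/\ finite_set G, G `<=` T & basic_open r `<=` \bigcup_(t in G) basic_open t].
Proof.
move=> /basic_open_cover_span[n [l [lT rn]]].
exists [set p.2 | p in [set` l]]; split; first exact/finite_image/finite_seq.
  by move=> _ [p pl <-]; exact: lT.
move=> x Pxr; have Pxrn : ~ P x (r ^+ n) by move=> /(prime_idealX (P_prime x)).
apply: contrapT => noCover; apply: Pxrn; rewrite rn.
apply: ideal_sum; first exact: prime_ideal_ideal.
by move=> p pl; apply: contrapT => Pxp; apply: noCover; exists p.2 => //; exists p.
Qed.

Lemma quasi_compact_basic r : quasi_compact O (basic_open r).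
Proof.
move=> F FO rF; pose T := [set t | exists2 V, F V & basic_open t `<=` V].
have rT : basic_open r `<=` \bigcup_(t in T) basic_open t.
  move=> x /rF[V FV Vx]; have [t tx tV] := (openP V).1 (FO V FV) x Vx.
  by exists t => //; exists V.
have [G [finG GT rG]] := basic_open_finite_subcover rT.
have /choice[pick pickP] : forall t, exists V, T t -> F V /\ basic_open t `<=` V.
  by move=> t; have [[V FV tV]|nTt] := pselect (T t); [exists V|exists set0].
exists (pick @` G); split; first by move=> _ [t Gt <-]; exact: (pickP t (GT t Gt)).1.
  exact: finite_image.
move=> x /rG[t Gt tx]; exists (pick t); first by exists t.
exact: (pickP t (GT t Gt)).2.
Qed.

Lemma scott_open_of_open U : O U -> scott_open_dual le U.
Proof.
move=> oU; split=> [x y Ux yx|D i Ddir iinf Ui]; first exact: open_down oU Ux yx.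
have [q Pq] : exists q, P q = \bigcap_(Q in P @` D) Q.
  apply: P_surj; apply: prime_ideal_bigcap_directed.
  - by have [d Dd] := Ddir.1; exists (P d), d.
  - move=> _ _ [a Da <-] [b Db <-].
    have [c [Dc /spec_leP ca /spec_leP cb]] := Ddir.2 a b Da Db.
    by exists (P c); split=> //; exists c.
  - by move=> _ [d _ <-].
have qi : le q i by apply: iinf.2 => d Dd; apply/spec_leP; rewrite Pq => r; apply; exists d.
have [r rq rU] := (openP U).1 oU q (open_down oU Ui qi).
have [d Dd Pdr] : exists2 d, D d & ~ P d r.
  apply: contrapT => noD; apply: rq; rewrite Pq => _ [d Dd <-].
  by apply: contrapT => Pdr; apply: noD; exists d.
by exists d; split=> //; exact: rU.
Qed.

(* Were [q] outside [U = D(S)], the opens [D(S `&` P c)] would cover [U]; a finite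
   subcover is dominated by one [D(S `&` P c)], which misses [c] itself. *)
Lemma open_quasi_compact_chain_ub U (C : set X) q :
  O U -> quasi_compact O U -> C `<=` U -> C !=set0 -> total_on C le ->
  P q `<=` \bigcup_(c in C) P c -> U q.
Proof.
move=> oU qU CU [c0 Cc0] Ctot Pq; apply: contrapT => Uq.
have /openE[S eU] := oU.
have SPq : S `<=` P q.
  move=> s Ss; apply: contrapT => Pqs; apply: Uq; rewrite eU => SP; exact: Pqs (SP s Ss).
pose W c := [set x | ~ S `&` P c `<=` P x].
have W_open : W @` C `<=` O by move=> _ [c _ <-]; apply/openE; exists (S `&` P c).
have W_cover : U `<=` \bigcup_(V in W @` C) V.
  move=> x; rewrite {1}eU => /= SPx.
  have [s Ss Pxs] : exists2 s, S s & ~ P x s.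
    apply: contrapT => noS; apply: SPx => s Ss; apply: contrapT => Pxs.
    by apply: noS; exists s.
  have [c Cc Pcs] := Pq s (SPq s Ss).
  by exists (W c); [exists c|move=> SPcx; exact: Pxs (SPcx s (conj Ss Pcs))].
have W_tot : total_on (W @` C) subset.
  have W_mono c d : le c d -> W c `<=` W d.
    move=> /spec_leP cd x /= SPcx SPdx; apply: SPcx => s [Ss Pcs].
    by apply: SPdx; split=> //; exact: cd.
  move=> _ _ [c Cc <-] [d Cd <-].
  by have [cd|dc] := Ctot c d Cc Cd; [left|right]; exact: W_mono.
have [G [GW finG UG]] := qU _ W_open W_cover.
have [_ [c Cc <-] Gc] := total_on_finite_ub (fun A B C => @subset_trans _ B A C) W_tot
  (ex_intro _ (W c0) (ex_intro2 _ _ c0 Cc0 erefl)) finG GW.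
have [V GV Vc] := UG c (CU c Cc).
by apply: (Gc V GV c Vc) => s [].
Qed.

Lemma exists_maximal_above U x : O U -> quasi_compact O U -> U x ->
  exists m, maximal_elements le U m /\ le x m.
Proof.
move=> oU qU Ux.
have [|m [Um xm mmax]] := Zorn_above spec_le_refl spec_le_trans spec_le_anti _ Ux.
  move=> C CU C0 Ctot.
  have [q Pq] : exists q, P q = \bigcup_(Q in P @` C) Q.
    apply: P_surj; apply: prime_ideal_bigcup_chain.
    - by have [c Cc] := C0; exists (P c), c.
    - move=> _ _ [a Ca <-] [b Cb <-].
      by have [/spec_leP|/spec_leP] := Ctot a b Ca Cb; [left|right].
    - by move=> _ [c _ <-].
  exists q; last first.
    by move=> c Cc; apply/spec_leP; rewrite Pq => r Pcr; exists (P c) => //; exists c.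
  apply: open_quasi_compact_chain_ub oU qU CU C0 Ctot _.
  by rewrite Pq => r [_ [c Cc <-] Pcr]; exists c.
by exists m; split=> //; split.
Qed.

Lemma inverse_closed_down x : inverse_closed O (down_closure le x).
Proof.
apply/inverse_closedP => y yV; apply/spec_leP => r Pyr; apply: contrapT => Pxr.
have [] := yV (basic_open r) (open_basic r) (@quasi_compact_basic r) _ Pyr.
by move=> z /spec_leP zx Pzr; exact: Pxr (zx r Pzr).
Qed.

Lemma inverse_closed0 : inverse_closed O set0.
Proof.
rewrite -basic_open0; apply: inverse_closed_open; first exact: open_basic.
exact: quasi_compact_basic.
Qed.

Lemma inverse_closedU A B :
  inverse_closed O A -> inverse_closed O B -> inverse_closed O (A `|` B).
Proof.
have separate C y : inverse_closed O C -> ~ C y ->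
    exists V, [/\ O V, quasi_compact O V, C `<=` V & ~ V y].
  move=> /inverse_closedP Cic Cy; apply: contrapT => noV; apply: Cy; apply: Cic => V oV qV CV.
  by apply: contrapT => Vy; apply: noV; exists V.
move=> Aic Bic; apply/inverse_closedP => y yV; apply: contrapT => /not_orP[Ay By].
have [V1 [o1 q1 AV1 V1y]] := separate A y Aic Ay.
have [V2 [o2 q2 BV2 V2y]] := separate B y Bic By.
have [] // := yV (V1 `|` V2) (open_setU o1 o2) (quasi_compact_setU q1 q2) (setUSS AV1 BV2).
Qed.

Lemma down_subbasis_inverse_closed C : down_subbasis_closed le C -> inverse_closed O C.
Proof.
move=> [G [GK ->]]; apply: inverse_closed_bigcap => K /GK[F [finF ->]].
apply: finite_bigcup_closed => //; [exact: inverse_closed0|exact: inverse_closedU|].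
by move=> x _; exact: inverse_closed_down.
Qed.

Lemma open_of_scott_locally_max U :
  locally_with_maximum O -> scott_open_dual le U -> O U.
Proof.
move=> lwm [Udown Uscott]; apply/openP => x Ux.
pose D := [set m | exists V, [/\ O V, V x & is_maximum le V m]].
have Ddir : down_directed le D.
  split; first by have [V [oV Vx _ [m mV]]] := lwm x setT open_setT I; exists m, V.
  move=> a b [Va [oa xa [_ amax]]] [Vb [ob xb [_ bmax]]].
  have [V [oV Vx VVab [m [Vm mmax]]]] := lwm x _ (open_setI oa ob) (conj xa xb).
  have [Vam Vbm] := VVab m Vm.
  by exists m; split; [exists V|exact: amax|exact: bmax].
have Dinf : is_inf le D x.
  split=> [m [V [_ Vx [_ mmax]]]|l lD]; first exact: mmax.
  apply/spec_leP => r Plr; apply: contrapT => Pxr.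
  have [V [oV Vx Vr [m [Vm mmax]]]] := lwm x _ (open_basic r) Pxr.
  have lm : le l m by apply: lD; exists V.
  by apply: (Vr l (open_down oV Vm lm)).
have [m [[V [oV Vx [Vm mmax]]] Um]] := Uscott D x Ddir Dinf Ux.
have [r rx rV] := (openP V).1 oV x Vx.
by exists r => // z /rV Vz; exact: Udown m z Um (mmax z Vz).
Qed.

Lemma inverse_closed_down_subbasis C :
  (forall U, O U -> quasi_compact O U -> finite_set (maximal_elements le U)) ->
  inverse_closed O C <-> down_subbasis_closed le C.
Proof.
move=> finM; split; last exact: down_subbasis_inverse_closed.
move=> [G [GV ->]]; exists G; split=> // V GVV; have [oV qV] := GV V GVV.
exists (maximal_elements le V); split; first exact: finM.
apply/seteqP; split=> [z Vz|z [m [Vm _] zm]]; last exact: open_down oV Vm zm.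
by have [m [Mm zm]] := exists_maximal_above oV qV Vz; exists m.
Qed.

Lemma le_of_down_union_nbhs a y :
  (forall C, inverse_closed O C <-> down_subbasis_closed le C) ->
  (forall K, finite_down_union le K -> (exists V, [/\ O V, V y & V `<=` K]) -> K a) ->
  le a y.
Proof.
move=> subbasisE aK; apply/spec_leP => r Par; apply: contrapT => Pyr.
have [G [GK eG]] := (subbasisE (basic_open r)).1
  (inverse_closed_open (open_basic r) (@quasi_compact_basic r)).
have : basic_open r a.
  rewrite eG => K GK'; apply: aK; first exact: GK.
  by exists (basic_open r); split; [exact: open_basic|exact: Pyr|rewrite eG => z; apply].
by apply.
Qed.

Lemma open_of_scott_complete_lattice U : complete_lattice le ->
  (forall C, inverse_closed O C <-> down_subbasis_closed le C) ->
  scott_open_dual le U -> O U.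
Proof.
move=> lattice subbasisE Uscott; apply/openP => y Uy; apply: contrapT => noBasic.
have V_meets V : O V -> V y -> V `&` ~` U !=set0.
  move=> oV Vy; apply: contrapT => VU; apply: noBasic.
  have [r ry rV] := (openP V).1 oV y Vy; exists r => // z /rV Vz.
  by apply: contrapT => Uz; apply: VU; exists z.
pose KK := [set K | finite_down_union le K /\ exists V, [/\ O V, V y & V `<=` K]].
have [|||||a Ua aKK] := @scott_closed_meets_bigcap X le spec_le_refl spec_le_trans
  spec_le_anti lattice (~` U) KK.
- by rewrite setCK.
- by move=> K [].
- move=> K1 K2 [K1fin [V1 [o1 y1 V1K1]]] [K2fin [V2 [o2 y2 V2K2]]]; split.
    exact: (finite_down_unionI spec_le_trans lattice).
  by exists (V1 `&` V2); split; [exact: open_setI|split|exact: setISS].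
- move=> K [_ [V [oV Vy VK]]]; have [z [Vz Uz]] := V_meets V oV Vy.
  by exists z; split=> //; exact: VK.
- have [[t tsup] _] := lattice setT; exists (down_closure le t); split.
    by exists [set t]; rewrite bigcup_set1; split=> //; exact: finite_set1.
  by exists setT; split=> //; [exact: open_setT|move=> z _; exact: tsup.1].
apply: Ua (Uscott.1 y a Uy _); apply: le_of_down_union_nbhs subbasisE _.
by move=> K Kfin KV; apply: aKK.
Qed.

End SpecHomeo.

Local Close Scope ring_scope.

Theorem proposition3p6 (X : Type) (O : set (set X)) :
  spectral O ->
  let le := spec_le O in
  let c1 := locally_with_maximum O in
  let c2 := forall U : set X, O U <-> scott_open_dual le U in
  let c3 := forall U : set X, O U -> quasi_compact O U ->
              finite_set (maximal_elements le U) in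
  let c4 := forall C : set X, inverse_closed O C <-> down_subbasis_closed le C in
  [/\ c1 -> c2, c2 -> c3, c3 -> c4 &
      complete_lattice le -> (c2 <-> c3) /\ (c3 <-> c4)].
Proof.
move=> /spectral_spec_homeo[R [P homeo]] le c1 c2 c3 c4.
have c12 : c1 -> c2.
  move=> lwm U; split; first exact: (scott_open_of_open homeo).
  exact: (open_of_scott_locally_max homeo).
have c23 : c2 -> c3 by move=> scottE U; exact: finite_maximal_of_scott.
have c34 : c3 -> c4 by move=> finM C; exact: (inverse_closed_down_subbasis homeo).
split=> // lattice.
have c42 : c4 -> c2.
  move=> subbasisE U; split; first exact: (scott_open_of_open homeo).
  exact: (open_of_scott_complete_lattice homeo).
by split; [split=> [/c23|/c34/c42]|split=> [/c34|/c42/c23]].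
Qed.
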